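(* Let $m,n,k$ be positive integers, $A\in\mathbb{R}^{m\times n}$, $x^*\in\mathbb{R}^n$ with support $S^*$ satisfying $1\le|S^*|\le k$, $e\in\mathbb{R}^m$, $y=Ax^*+e$. For every initialization $\mathcal{X}^0\in\mathbb{R}^n$ and every $\eta>0$, consider the Support Exploration Algorithm using the Oracle Update Rule. Then there exists an integer $$t_s\le k\left(1+\frac{2\|\mathcal{X}^0\|_\infty}{\eta\min_{i\in S^*}|x^*_i|}\right)$$ such that $S^*\subseteq S^{t_s}$. Moreover $u^{t_s}=0$ and the algorithm returns a vector in $\arg\min\{\|Ax-y\|_2^2: x\in\mathbb{R}^n,\ \mathrm{supp}(x)\subseteq S^{t_s}\}$.
   Context: $S^*=\{i:x^*_i\neq0\}$. For $v\in\mathbb{R}^n$, $\mathrm{largest}_k(v)$ is the set of indices of the $k$ entries of $v$ with largest absolute value (ties broken by selecting the highest indices). For $S\subseteq\{1,\dots,n\}$, $A_S$ is the submatrix of columns indexed by $S$ and $A_S^\dagger$ its Moore–Penrose pseudoinverse. The Support Exploration Algorithm using the Oracle Update Rule, with inputs $x^*,S^*,k,\eta,y,A$ and initialization $\mathcal{X}^0$, iterates for $t=0,1,2,\dots$: $S^t=\mathrm{largest}_k(\mathcal{X}^t)$; $u^t\in\mathbb{R}^n$ with $u^t_i=-\eta x^*_i$ if $i\in S^*\setminus S^t$ and $u^t_i=0$ otherwise; $\mathcal{X}^{t+1}=\mathcal{X}^t-u^t$; it stops at the first $t$ such that $u^t=0$ and then returns $x$ with $x_i=0$ for $i\notin S^t$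 and $x_{S^t}=A_{S^t}^\dagger y$. *)

From HB Require Import structures.
From mathcomp Require Import all_boot all_order all_algebra.
From mathcomp Require Import boolp reals.
Set Implicit Arguments. Unset Strict Implicit. Unset Printing Implicit Defensive.
Import Order.TTheory GRing.Theory Num.Theory.
Local Open Scope ring_scope.

Section SEA.
Variable R : realType.

Definition supp n (x : 'cV[R]_n) : {set 'I_n} := [set i | x i 0 != 0].

Definition beats n (v : 'cV[R]_n) (j i : 'I_n) : bool :=
  (`|v i 0| < `|v j 0|) || ((`|v j 0| == `|v i 0|) && (i < j)%N).

(* largest_k(v): the k indices of largest absolute value (all indices if k >= n) *)
Definition largest n (k : nat) (v : 'cV[R]_n) : {set 'I_n} :=
  [set i | (#|[set j | beats v j i]| < k)%N].

Definition is_mp_pinv p q (M : 'M[R]_(p, q)) (P : 'M[R]_(q, p)) : Prop :=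
  [/\ M *m P *m M = M, P *m M *m P = P,
      (M *m P)^T = M *m P & (P *m M)^T = P *m M].

Definition mp_pinv p q (M : 'M[R]_(p, q)) : 'M[R]_(q, p) :=
  match pselect (exists P, is_mp_pinv M P) with
  | left h => projT1 (cid h)
  | right _ => 0
  end.

(* A_S : columns of A indexed by S (in increasing order) *)
Definition colS m n (A : 'M[R]_(m, n)) (S : {set 'I_n}) : 'M[R]_(m, #|S|) :=
  \matrix_(i, j) A i (enum_val j).

Definition embS n (S : {set 'I_n}) : 'M[R]_(n, #|S|) :=
  \matrix_(i, j) (i == enum_val j)%:R.

Section Alg.
Variables (m n k : nat) (xs : 'cV[R]_n) (eta : R) (X0 : 'cV[R]_n).

Definition Sstar : {set 'I_n} := supp xs.

Fixpoint sea_X (t : nat) : 'cV[R]_n :=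
  match t with
  | O => X0
  | t'.+1 =>
      let X := sea_X t' in
      let u := \col_i (if (i \in Sstar) && (i \notin largest k X)
                       then - eta * xs i 0 else 0) in
      X - u
  end.

Definition sea_S (t : nat) : {set 'I_n} := largest k (sea_X t).

Definition sea_u (t : nat) : 'cV[R]_n :=
  \col_i (if (i \in Sstar) && (i \notin sea_S t) then - eta * xs i 0 else 0).

Definition sea_out (A : 'M[R]_(m, n)) (y : 'cV[R]_m) (t : nat) : 'cV[R]_n :=
  embS (sea_S t) *m (mp_pinv (colS A (sea_S t)) *m y).
End Alg.

Definition sqnorm p (v : 'cV[R]_p) : R := \sum_i v i 0 ^+ 2.

Definition normInf p (v : 'cV[R]_p) : R := \big[Num.max/0]_i `|v i 0|.

(* min_{i in S} |x_i|; the seed normInf x is >= every |x_i|, so for nonempty S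
   this is exactly the minimum *)
Definition minAbsOn p (x : 'cV[R]_p) (S : {set 'I_p}) : R :=
  \big[Num.min/normInf x]_(i in S) `|x i 0|.

Definition argmin_on m n (A : 'M[R]_(m, n)) (y : 'cV[R]_m) (S : {set 'I_n})
  (x : 'cV[R]_n) : Prop :=
  supp x \subset S /\
  forall z : 'cV[R]_n, supp z \subset S ->
    sqnorm (A *m x - y) <= sqnorm (A *m z - y).

End SEA.

From HB Require Import structures.
From mathcomp Require Import all_boot all_order all_algebra.
From mathcomp Require Import boolp reals lra.
Import Order.TTheory GRing.Theory Num.Theory.
Set Implicit Arguments. Unset Strict Implicit. Unset Printing Implicit Defensive.
Local Open Scope ring_scope.

(* The oracle rule moves X^t only on S*, and moves an entry i of S* only when
   i is missing from S^t, each time by eta x*_i; so X^t_i = X^0_i + c eta x*_i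
   where c counts the earlier misses of i.  Entries off S* keep modulus at most
   |X^0|_oo, so an entry of S* above |X^0|_oo beats all of them and, as
   |S*| <= k, lies among the k largest.  A miss therefore forces
   c eta |x*_i| <= 2 |X^0|_oo: each i is missed at most
   1 + 2 |X^0|_oo / (eta min |x*_i|) times, and since every step before the
   stop misses some i, this bounds the stopping time.  The output is a
   least-squares solution because a Moore-Penrose inverse of A_S gives a
   residual orthogonal to the range of A_S. *)

Lemma row_free_mulmx_tr_unit (R : realFieldType) r p (N : 'M[R]_(r, p)) :
  row_free N -> N *m N^T \in unitmx.
Proof.
move=> freeN; rewrite -row_free_unit; apply: inj_row_free => v vNNt0.
have vN_sqr0 : \sum_i ((v *m N) 0 i) ^+ 2 = 0.
  transitivity (((v *m N) *m (v *m N)^T) 0 0).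
    by rewrite mxE; apply: eq_bigr => i _; rewrite !mxE expr2.
  by rewrite trmx_mul !mulmxA -(mulmxA v) vNNt0 mul0mx mxE.
have vN0 : v *m N = 0.
  apply/matrixP => i j; rewrite (ord1 i) [RHS]mxE; apply/eqP; rewrite -sqrf_eq0.
  by rewrite (psumr_eq0P (fun l _ => sqr_ge0 ((v *m N) 0 l)) vN_sqr0).
by apply: (row_free_inj freeN); rewrite vN0 mul0mx.
Qed.

Section LeastSquares.
Variable R : realType.

Lemma is_mp_pinv_full_rank_factor p q r (B : 'M[R]_(p, r)) (C : 'M[R]_(r, q)) :
  B^T *m B \in unitmx -> C *m C^T \in unitmx ->
  is_mp_pinv (B *m C) (C^T *m invmx (C *m C^T) *m invmx (B^T *m B) *m B^T).
Proof.
move=> uBtB uCCt; set P := _ *m B^T.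
have symB : (invmx (B^T *m B))^T = invmx (B^T *m B) by rewrite trmx_inv trmx_mul trmxK.
have symC : (invmx (C *m C^T))^T = invmx (C *m C^T) by rewrite trmx_inv trmx_mul trmxK.
have BCP : B *m C *m P = B *m invmx (B^T *m B) *m B^T.
  by rewrite !mulmxA -(mulmxA B C C^T) mulmxK.
have PBC : P *m (B *m C) = C^T *m invmx (C *m C^T) *m C.
  by rewrite !mulmxA -(mulmxA _ B^T B) mulmxKV.
split.
- by rewrite BCP !mulmxA -(mulmxA _ B^T B) mulmxKV.
- by rewrite PBC !mulmxA -(mulmxA _ C C^T) mulmxKV.
- by rewrite BCP !trmx_mul trmxK symB mulmxA.
- by rewrite PBC !trmx_mul trmxK symC mulmxA.
Qed.

Lemma mp_pinv_exists p q (M : 'M[R]_(p, q)) : exists P, is_mp_pinv M P.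
Proof.
rewrite -(mulmx_base M); eexists; apply: is_mp_pinv_full_rank_factor.
  rewrite -[X in _ *m X]trmxK; apply: row_free_mulmx_tr_unit.
  by rewrite /row_free mxrank_tr; exact: col_base_full.
exact/row_free_mulmx_tr_unit/row_base_free.
Qed.

Lemma mp_pinvP p q (M : 'M[R]_(p, q)) : is_mp_pinv M (mp_pinv M).
Proof.
rewrite /mp_pinv; case: pselect => [h|]; first exact: projT2 (cid h).
by move/(_ (mp_pinv_exists M)).
Qed.

Lemma sqnormE p (v : 'cV[R]_p) : sqnorm v = (v^T *m v) 0 0.
Proof. by rewrite /sqnorm mxE; apply: eq_bigr => i _; rewrite !mxE expr2. Qed.

Lemma mp_pinv_least_squares p q (M : 'M[R]_(p, q)) (P : 'M[R]_(q, p))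
    (y : 'cV[R]_p) (w : 'cV[R]_q) :
  is_mp_pinv M P -> sqnorm (M *m (P *m y) - y) <= sqnorm (M *m w - y).
Proof.
case=> MPM _ symMP _.
have MtMP : M^T *m (M *m P) = M^T by rewrite -symMP -trmx_mul MPM.
set r := M *m (P *m y) - y; set d := M *m (w - P *m y).
have Mtr : M^T *m r = 0 by rewrite /r mulmxBr !mulmxA -(mulmxA M^T) MtMP subrr.
have dtr : d^T *m r = 0 by rewrite /d trmx_mul -mulmxA Mtr mulmx0.
have rtd : r^T *m d = 0 by apply: trmx_inj; rewrite trmx_mul trmxK dtr trmx0.
have -> : M *m w - y = d + r by rewrite /d /r mulmxBr addrA subrK.
clearbody r d; rewrite !sqnormE [(d + r)^T]raddfD /= mulmxDl !mulmxDr dtr rtd addr0.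
rewrite add0r [in X in _ <= X]mxE lerDr -sqnormE.
by apply: sumr_ge0 => i _; exact: sqr_ge0.
Qed.

Lemma supp_embS_mul n (S : {set 'I_n}) (w : 'cV[R]_#|S|) :
  supp (embS R S *m w) \subset S.
Proof.
apply/subsetP => i; rewrite inE mxE; apply: contraR => iNS.
apply/eqP/big1 => j _; rewrite mxE.
have /negbTE-> : i != enum_val j by apply: contraNneq iNS => ->; exact: enum_valP.
by rewrite mul0r.
Qed.

Lemma mulmx_embS m n (A : 'M[R]_(m, n)) (S : {set 'I_n}) : A *m embS R S = colS A S.
Proof.
apply/matrixP => i j; rewrite !mxE (bigD1 (enum_val j)) //= mxE eqxx mulr1.
by rewrite big1 ?addr0 // => l /negbTE nl; rewrite mxE nl mulr0.
Qed.

Lemma mulmx_supp_sub m n (A : 'M[R]_(m, n)) (S : {set 'I_n}) (z : 'cV[R]_n) :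
  supp z \subset S -> A *m z = colS A S *m \col_j z (enum_val j) 0.
Proof.
move=> /subsetP zS; apply/matrixP => i l; rewrite (ord1 l) !mxE.
rewrite (bigID (mem S)) /= [X in _ + X]big1 ?addr0; last first.
  move=> j jNS; have : j \notin supp z by apply: contra jNS; exact: zS.
  by rewrite inE negbK => /eqP->; rewrite mulr0.
by rewrite big_enum_val; apply: eq_bigr => j _; rewrite !mxE.
Qed.

Lemma argmin_on_embS_pinv m n (A : 'M[R]_(m, n)) (y : 'cV[R]_m) (S : {set 'I_n}) :
  argmin_on A y S (embS R S *m (mp_pinv (colS A S) *m y)).
Proof.
split=> [|z zS]; first exact: supp_embS_mul.
by rewrite mulmxA mulmx_embS (mulmx_supp_sub A zS); exact/mp_pinv_least_squares/mp_pinvP.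
Qed.

End LeastSquares.

Section Magnitudes.
Variable R : realType.

Lemma normInf_ge p (x : 'cV[R]_p) i : `|x i 0| <= normInf x.
Proof. exact: (le_bigmax _ (fun i => `|x i 0|)). Qed.

Lemma normInf_ge0 p (x : 'cV[R]_p) : 0 <= normInf x.
Proof. exact: bigmax_ge_id. Qed.

Lemma minAbsOn_le p (x : 'cV[R]_p) (S : {set 'I_p}) i : i \in S -> minAbsOn x S <= `|x i 0|.
Proof. exact: (bigmin_le_cond _ (fun i => `|x i 0|)). Qed.

Lemma minAbsOn_ge0 p (x : 'cV[R]_p) (S : {set 'I_p}) : 0 <= minAbsOn x S.
Proof.
apply: (big_ind (fun a => 0 <= a)) => [|a b a0 b0|i _]; first exact: normInf_ge0.
  by rewrite le_min a0 b0.
exact: normr_ge0.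
Qed.

Lemma minAbsOn_supp_gt0 p (x : 'cV[R]_p) i : i \in supp x -> 0 < minAbsOn x (supp x).
Proof.
move=> ix; apply/bigmin_gtP; split=> [|j]; last by rewrite inE normr_gt0.
by apply: lt_le_trans (normInf_ge x i); move: ix; rewrite inE normr_gt0.
Qed.

Lemma mem_largest n k (v : 'cV[R]_n) (S : {set 'I_n}) i :
  (#|S| <= k)%N -> i \in S -> (forall j, j \notin S -> `|v j 0| < `|v i 0|) ->
  i \in largest k v.
Proof.
move=> Sk iS Sdom; rewrite inE.
have beatS : [set j | beats v j i] \subset S :\ i.
  apply/subsetP => j; rewrite !inE /beats.
  have [-> | ji] := eqVneq j i; first by rewrite ltxx ltnn andbF.
  apply: contraTT => jNS; have := Sdom j jNS.
  by rewrite negb_or negb_and -leNgt => /[dup] /ltW -> /lt_eqF ->.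
by apply: leq_ltn_trans (subset_leq_card beatS) _; rewrite (cardsD1 i) iS in Sk.
Qed.

End Magnitudes.

Section OracleDynamics.
Variables (R : realType) (n k : nat) (xs : 'cV[R]_n) (eta : R) (X0 : 'cV[R]_n).
Hypotheses (eta_gt0 : 0 < eta) (supp_le_k : (#|supp xs| <= k)%N).

Local Notation X := (sea_X k xs eta X0).
Local Notation S := (sea_S k xs eta X0).
Local Notation u := (sea_u k xs eta X0).

Lemma sea_u_eq0 t : (u t == 0) = (supp xs \subset S t).
Proof.
apply/eqP/subsetP => [/matrixP u0 i iS | supS].
  apply: contraT => iNS; move: (u0 i 0); rewrite !mxE iS iNS /= => /eqP.
  by rewrite mulf_eq0 oppr_eq0 (gt_eqF eta_gt0) /=; move: iS; rewrite inE => /negbTE->.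
apply/matrixP => i j; rewrite !mxE.
by case: ifP => // /andP [iS]; rewrite supS.
Qed.

Definition missed t i : bool := (i \in supp xs) && (i \notin S t).

Definition miss_count i t : nat := \sum_(s < t) missed s i.

Lemma sea_X_entry t i : X t i 0 = X0 i 0 + (miss_count i t)%:R * (eta * xs i 0).
Proof.
elim: t => [|t IH]; first by rewrite /miss_count big_ord0 mul0r addr0.
rewrite /= !mxE IH /miss_count big_ord_recr natrD mulrDl addrA /missed /sea_S.
by case: ifP; rewrite /= ?mul1r ?mul0r ?mulNr ?opprK ?subr0 ?addr0.
Qed.

Lemma sea_X_notin_supp t i : i \notin supp xs -> X t i 0 = X0 i 0.
Proof.
move=> iNS; rewrite sea_X_entry /miss_count big1 ?mul0r ?addr0 //.
by move=> s _; rewrite /missed (negbTE iNS).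
Qed.

Lemma mem_sea_S_large t i :
  i \in supp xs -> normInf X0 < `|X t i 0| -> i \in S t.
Proof.
move=> iS large; apply: mem_largest supp_le_k iS _ => j jNS.
by rewrite sea_X_notin_supp //; exact: le_lt_trans (normInf_ge X0 j) large.
Qed.

Definition crossing_time : R := 2 * normInf X0 / (eta * minAbsOn xs (supp xs)).

Lemma crossing_time_ge0 : 0 <= crossing_time.
Proof. by rewrite divr_ge0 ?mulr_ge0 ?normInf_ge0 ?minAbsOn_ge0 ?(ltW eta_gt0). Qed.

Lemma miss_count_le t i : i \in supp xs -> (miss_count i t)%:R <= 1 + crossing_time.
Proof.
move=> iS; have minAbs_gt0 := minAbsOn_supp_gt0 iS.
elim: t => [|t IH].
  by rewrite /miss_count big_ord0 addr_ge0 ?crossing_time_ge0.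
rewrite /miss_count big_ord_recr natrD -/(miss_count i t) addrC.
case missed_t: (missed t i); last by rewrite add0r.
rewrite lerD2l ler_pdivlMr ?mulr_gt0 //.
have small : `|X t i 0| <= normInf X0.
  by rewrite leNgt; apply: contraL missed_t => /(mem_sea_S_large iS); rewrite /missed iS => ->.
have drift : `|(miss_count i t)%:R * (eta * xs i 0)| <= 2 * normInf X0.
  have := lerB_normD ((miss_count i t)%:R * (eta * xs i 0)) (X0 i 0).
  rewrite [_ + X0 i 0]addrC -sea_X_entry; have := normInf_ge X0 i; lra.
apply: le_trans drift; rewrite normrM normr_nat normrM (gtr0_norm eta_gt0).
by rewrite ler_wpM2l // ler_wpM2l ?(ltW eta_gt0) // minAbsOn_le.
Qed.

Lemma steps_le_miss_count T : (forall s, (s < T)%N -> u s != 0) ->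
  (T <= \sum_(i in supp xs) miss_count i T)%N.
Proof.
move=> running; rewrite /miss_count exchange_big /= -[X in (X <= _)%N]card_ord -sum1_card.
apply: leq_sum => s _; have := running s (ltn_ord s).
rewrite sea_u_eq0 => /subsetPn [i iS iNS].
by rewrite (bigD1 i) //= /missed iS iNS.
Qed.

Lemma sea_stop_bound T : (forall s, (s < T)%N -> u s != 0) ->
  T%:R <= k%:R * (1 + crossing_time).
Proof.
move=> running; have b_ge0 : 0 <= 1 + crossing_time by rewrite addr_ge0 ?crossing_time_ge0.
apply: le_trans (_ : \sum_(i in supp xs) (1 + crossing_time) <= _).
  rewrite (le_trans _ (ler_sum _ (fun i iS => miss_count_le T iS))) //.
  by rewrite -natr_sum ler_nat steps_le_miss_count.
rewrite sumr_const -[_ *+ #|_|]mulr_natl.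
by apply: ler_wpM2r; rewrite ?ler_nat.
Qed.

Lemma sea_terminates : exists t, u t == 0.
Proof.
apply/not_existsP => running.
have b_ge0 : 0 <= k%:R * (1 + crossing_time).
  by rewrite mulr_ge0 ?addr_ge0 ?crossing_time_ge0.
have := sea_stop_bound (T := Num.bound (k%:R * (1 + crossing_time)))
  (fun s _ => introN idP (running s)).
by have := archi_boundP b_ge0; lra.
Qed.

End OracleDynamics.

Theorem theoremC1 (R : realType) (m n k : nat)
  (A : 'M[R]_(m, n)) (xs : 'cV[R]_n) (e : 'cV[R]_m) (y : 'cV[R]_m)
  (X0 : 'cV[R]_n) (eta : R) :
  (0 < m)%N -> (0 < n)%N -> (0 < k)%N ->
  (1 <= #|supp xs|)%N -> (#|supp xs| <= k)%N ->
  y = A *m xs + e ->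
  0 < eta ->
  exists ts : nat,
    [/\ ts%:R <= k%:R * (1 + 2 * normInf X0 / (eta * minAbsOn xs (supp xs))),
        supp xs \subset sea_S k xs eta X0 ts,
        sea_u k xs eta X0 ts = 0,
        (forall t, (t < ts)%N -> sea_u k xs eta X0 t != 0) &
        argmin_on A y (sea_S k xs eta X0 ts) (sea_out k xs eta X0 A y ts)].
Proof.
(* The least-squares claim holds for every y: only |S*| <= k and eta > 0 matter. *)
move=> _ _ _ _ supp_le_k _ eta_gt0.
have [ts /eqP stop_ts first_stop] := ex_minnP (sea_terminates X0 eta_gt0 supp_le_k).
have running t : (t < ts)%N -> sea_u k xs eta X0 t != 0.
  by apply: contraTN => /first_stop; rewrite -leqNgt.
exists ts; split=> //.
- exact: sea_stop_bound.
- by rewrite -(sea_u_eq0 _ _ _ eta_gt0) stop_ts.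
- exact: argmin_on_embS_pinv.
Qed.
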